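(* Consider fair division instances with $n=2$ agents, $m$ divisible goods, additive valuations and generalized assignment constraints (sizes and budgets publicly known; agents report valuations). Let $\mathcal{M}$ be the mechanism that splits each good $g$ into two identical halves $g^{(1)},g^{(2)}$, forms $S_1=\{g^{(1)}:g\in[m]\}$ and $S_2=\{g^{(2)}:g\in[m]\}$, and for each agent $i\in\{1,2\}$ sets $x_i$ to be a maximum-valued (with respect to $i$'s reported valuation) feasible-for-$i$ fractional subset of $S_i$, the rest going to charity. Then $\mathcal{M}$ is truthful and always outputs an FEF allocation.
   Context: An allocation is $x=(x_1,x_2)$ with $x_i\in[0,1]^m$ and $x_{1,g}+x_{2,g}\le1$; the charity receives $x_{\mathrm{charity},g}=1-x_{1,g}-x_{2,g}$. Additive valuations: $v_i(y)=\sum_g y_g v_{i,g}$. Generalized assignment constraints: agent $i$ has sizes $s_i(g)\ge0$ and budget $B_i$; bundle $y$ is feasible for $i$ iff $\sum_g s_i(g)y_g\le B_i$. A feasible allocation is FEF if for all agents $i,j$, every $y\le x_j$ (componentwise) feasible for $i$ has $v_i(x_i)\ge v_i(y)$, and every $y\le x_{\mathrm{charity}}$ feasible for $i$ has $v_i(x_i)\ge v_i(y)$. A mechanism maps reported additive valuation profiles to feasible allocations; it is truthful if for every agent $i$ with true valuation $v_i$ and every profile of reports of the others, agent $i$'s true value for her bundle when reporting $v_i$ is at least her true value for her bundle under any misreport $v_i'$. *)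

From HB Require Import structures.
From mathcomp Require Import all_boot all_order all_algebra.
Set Implicit Arguments. Unset Strict Implicit. Unset Printing Implicit Defensive.
Import Order.TTheory GRing.Theory Num.Theory.
Local Open Scope ring_scope.

Section Defs.
Variables (R : realFieldType) (m : nat).

Definition agent := 'I_2.
Definition good := 'I_m.

Definition bundle (y : good -> R) : Prop := forall g, 0 <= y g <= 1.

Definition value (v : good -> R) (y : good -> R) : R := \sum_(g : good) y g * v g.

Definition nonneg_val (v : good -> R) : Prop := forall g, 0 <= v g.
Definition nonneg_profile (vs : agent -> good -> R) : Prop :=
  forall i, nonneg_val (vs i).

Definition fits (s : good -> R) (B : R) (y : good -> R) : Prop :=
  \sum_(g : good) s g * y g <= B.

Definition le_bundle (y z : good -> R) : Prop := forall g, y g <= z g.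

Definition charity (x : agent -> good -> R) (g : good) : R :=
  1 - x ord0 g - x (lift ord0 ord0) g.

Definition feasible_alloc (s : agent -> good -> R) (B : agent -> R)
  (x : agent -> good -> R) : Prop :=
  (forall i, bundle (x i)) /\
  (forall g, x ord0 g + x (lift ord0 ord0) g <= 1) /\
  (forall i, fits (s i) (B i) (x i)).

Definition FEF (s : agent -> good -> R) (B : agent -> R)
  (vs : agent -> good -> R) (x : agent -> good -> R) : Prop :=
  forall i : agent,
    (forall j : agent, forall y, bundle y -> le_bundle y (x j) ->
        fits (s i) (B i) y -> value (vs i) y <= value (vs i) (x i)) /\
    (forall y, bundle y -> le_bundle y (charity x) ->
        fits (s i) (B i) y -> value (vs i) y <= value (vs i) (x i)).

Definition mechanism := (agent -> good -> R) -> agent -> good -> R.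

Definition update (vs : agent -> good -> R) (i : agent) (w : good -> R) :
  agent -> good -> R := fun k => if k == i then w else vs k.

Definition truthful (M : mechanism) : Prop :=
  forall (vs : agent -> good -> R) (i : agent) (w : good -> R),
    nonneg_profile vs -> nonneg_val w ->
    value (vs i) (M (update vs i w) i) <= value (vs i) (M vs i).

(* fractional subsets of S_i: each good contributes its half g^(i), so the
   amount taken is in [0, 1/2] *)
Definition half_bundle (y : good -> R) : Prop := forall g, 0 <= y g <= 2^-1.

(* M is the halving mechanism: for every (nonnegative) reported profile, agent
   i receives a maximum-valued (w.r.t. i's report) feasible-for-i fractional
   subset of S_i; ties broken arbitrarily. *)
Definition halving_mechanism (s : agent -> good -> R) (B : agent -> R)
  (M : mechanism) : Prop :=
  forall vs, nonneg_profile vs -> forall i : agent,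
    half_bundle (M vs i) /\ fits (s i) (B i) (M vs i) /\
    (forall y, half_bundle y -> fits (s i) (B i) y ->
       value (vs i) y <= value (vs i) (M vs i)).

End Defs.

From HB Require Import structures.
From mathcomp Require Import all_boot all_order all_algebra.
Set Implicit Arguments. Unset Strict Implicit. Unset Printing Implicit Defensive.
Import Order.TTheory GRing.Theory Num.Theory.
Local Open Scope ring_scope.

(* Agent i's bundle maximises her report over the fitting half-bundles, a set
   that does not depend on any report: a misreport only selects another point
   of it, which is truthfulness. Whatever lies below the other agent's bundle
   is again a half-bundle. If y fits and lies below the charity's share, then
   x_i + y <= 1, so the midpoint of x_i and y is a fitting half-bundle;
   optimality of x_i against this midpoint and linearity of the valuation give
   v_i(y) <= v_i(x_i). *)

Section Bundles.
Variables (R : realFieldType) (m : nat).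
Implicit Types (a v s x y : good m -> R) (B : R).

Definition mid_bundle x y : good m -> R := fun g => (x g + y g) / 2.

Lemma sum_mul_mid a x y :
  \sum_g a g * mid_bundle x y g = (\sum_g a g * x g + \sum_g a g * y g) / 2.
Proof.
rewrite -big_split mulr_suml; apply: eq_bigr => g _.
by rewrite /mid_bundle mulrA mulrDr.
Qed.

Lemma valueE v y : value v y = \sum_g v g * y g.
Proof. by apply: eq_bigr => g _; rewrite mulrC. Qed.

Lemma value_mid v x y : value v (mid_bundle x y) = (value v x + value v y) / 2.
Proof. by rewrite !valueE sum_mul_mid. Qed.

Lemma fits_mid s B x y : fits s B x -> fits s B y -> fits s B (mid_bundle x y).
Proof.
rewrite /fits sum_mul_mid => hx hy.
by rewrite ler_pdivrMr ?ltr0n // mulr_natr mulr2n lerD.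
Qed.

Lemma value_le_of_mid v x y :
  value v (mid_bundle x y) <= value v x -> value v y <= value v x.
Proof.
by rewrite value_mid ler_pdivrMr ?ltr0n // mulr_natr mulr2n lerD2l.
Qed.

Lemma half_bundle_mid x y :
  (forall g, 0 <= x g) -> (forall g, 0 <= y g) -> (forall g, x g + y g <= 1) ->
  half_bundle (mid_bundle x y).
Proof.
move=> x0 y0 xy1 g; rewrite divr_ge0 ?addr_ge0 //=.
by rewrite ler_pdivrMr ?ltr0n // mulVf ?pnatr_eq0.
Qed.

Lemma half_bundle_le x y :
  half_bundle x -> bundle y -> le_bundle y x -> half_bundle y.
Proof.
move=> hx hy yx g; have /andP [y0 _] := hy g; have /andP [_ x_half] := hx g.
by rewrite y0 (le_trans (yx g)).
Qed.

Lemma bundle_half_bundle x : half_bundle x -> bundle x.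
Proof.
move=> hx g; have /andP [-> x_half] := hx g.
by rewrite (le_trans x_half) // invf_le1 ?ler1n ?ltr0n.
Qed.

End Bundles.

Lemma agent_cases (i : agent) : i = ord0 \/ i = lift ord0 ord0.
Proof. by case: i => [[|[|k]] // Hk]; [left|right]; apply/val_inj. Qed.

Lemma add_le1_of_le_charity (R : realFieldType) (m : nat)
    (x : agent -> good m -> R) (y : good m -> R) (i : agent) :
  (forall k g, 0 <= x k g) -> le_bundle y (charity x) ->
  forall g, x i g + y g <= 1.
Proof.
move=> x0 y_charity g; rewrite addrC -lerBrDr.
apply: le_trans (y_charity g) _; rewrite /charity -addrA lerD2l lerBlDr.
by case: (agent_cases i) => ->; rewrite ?addNr ?oppr_le0 ?lerDl x0.
Qed.

Section HalvingMechanism.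
Variables (R : realFieldType) (m : nat).
Variables (s : agent -> good m -> R) (B : agent -> R) (M : mechanism R m).
Hypothesis hM : halving_mechanism s B M.

Lemma update_nonneg (vs : agent -> good m -> R) i w :
  nonneg_profile vs -> nonneg_val w -> nonneg_profile (update vs i w).
Proof. by move=> vs0 w0 k; rewrite /update; case: (k == i). Qed.

Lemma halving_truthful : truthful M.
Proof.
move=> vs i w vs0 w0.
have [half_dev [fits_dev _]] := hM (update_nonneg i vs0 w0) i.
by have [_ [_ opt]] := hM vs0 i; exact: opt half_dev fits_dev.
Qed.

Section Outcome.
Variables (vs : agent -> good m -> R) (vs0 : nonneg_profile vs).

Let x := M vs.

Lemma halving_ge0 k g : 0 <= x k g.
Proof. by have [/(_ g) /andP [] ] := hM vs0 k. Qed.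

Lemma halving_le_half k g : x k g <= 2^-1.
Proof. by have [/(_ g) /andP [] ] := hM vs0 k. Qed.

Lemma halving_feasible : feasible_alloc s B x.
Proof.
split; [|split].
- by move=> k; apply: bundle_half_bundle; have [] := hM vs0 k.
- move=> g; rewrite [leRHS](splitr 1) mul1r.
  by rewrite lerD ?halving_le_half.
- by move=> k; have [_ []] := hM vs0 k.
Qed.

Lemma halving_FEF : FEF s B vs x.
Proof.
move=> i; have [_ [fits_i opt]] := hM vs0 i; split.
- move=> j y hy y_xj fits_y; apply: opt fits_y.
  by apply: half_bundle_le hy y_xj => g; rewrite halving_ge0 halving_le_half.
- move=> y hy y_charity fits_y; apply: value_le_of_mid.
  apply: opt (fits_mid fits_i fits_y).
  apply: half_bundle_mid; first exact: halving_ge0.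
  + by move=> g; have /andP [] := hy g.
  + exact: add_le1_of_le_charity halving_ge0 y_charity.
Qed.

End Outcome.
End HalvingMechanism.

Theorem theorem5 (R : realFieldType) (m : nat)
  (s : agent -> good m -> R) (B : agent -> R)
  (hs : forall i g, 0 <= s i g) (hB : forall i, 0 <= B i)
  (M : mechanism R m) (hM : halving_mechanism s B M) :
  truthful M /\
  (forall vs : agent -> good m -> R, nonneg_profile vs ->
     feasible_alloc s B (M vs) /\ FEF s B vs (M vs)).
Proof.
split; first exact: halving_truthful hM.
move=> vs vs0; exact: conj (halving_feasible hM vs0) (halving_FEF hM vs0).
Qed.
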